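(* Consider an $n$-player team problem with common cost $c$ satisfying Assumptions A1, A4 and A5. Let $\{\mu_m\}$ and $\mu$ be information structures satisfying Assumption A3 with $\mu_m\to\mu$ setwise. Then the team value function is upper semicontinuous along this sequence: $$\limsup_{m\to\infty}J^*(c,\mu_m)\le J^*(c,\mu).$$
   Context: $\mathbb{X},\mathbb{Y}^1,\dots,\mathbb{Y}^n$ are standard Borel spaces. An information structure is a probability measure $\mu$ on $\mathbb{X}\times\mathbb{Y}^1\times\cdots\times\mathbb{Y}^n$; its $\mathbb{X}$-marginal $\zeta$ is the prior. A team problem consists of standard Borel action spaces $\mathbb{U}^i$ and a common measurable cost $c:\mathbb{X}\times\mathbb{U}^1\times\cdots\times\mathbb{U}^n\to\mathbb{R}$; for a team policy $\bar\gamma=(\gamma^1,\dots,\gamma^n)$ with measurable $\gamma^i:\mathbb{Y}^i\to\mathbb{U}^i$, $J(c,\mu,\bar\gamma)=\int c(x,\gamma^1(y^1),\dots,\gamma^n(y^n))\,d\mu$, and $J^*(c,\mu)=\inf_{\bar\gamma}J(c,\mu,\bar\gamma)$. Setwise convergence: $\mu_m(A)\to\mu(A)$ for every Borel set $A$. Assumptions: A1: the cost is measurable and bounded. A3: $\mu\ll\zeta(dx)\bar Q^1(dy^1)\cdots\bar Q^n(dy^n)$ for some probability measures $\bar Q^i$ on $\mathbb{Y}^i$. A4: each action space is compact. A5: the bounded measurable cost is continuous in the players' actions for each fixed $x$, and each action space is compact. *)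

From HB Require Import structures.
From mathcomp Require Import all_boot all_order all_algebra.
From mathcomp Require Import all_classical all_reals all_analysis.
Set Implicit Arguments. Unset Strict Implicit. Unset Printing Implicit Defensive.
Import Order.TTheory GRing.Theory Num.Theory.
Import numFieldNormedType.Exports.
Local Open Scope classical_set_scope.
Local Open Scope ring_scope.

Definition metric_open (R : realType) (T : Type) (dist : T -> T -> R) (A : set T) :=
  forall x, A x -> exists2 e : R, 0 < e & forall y, dist x y < e -> A y.

(* T is standard Borel: its sigma-algebra is the Borel sigma-algebra of a
   Polish (separable, completely metrizable) topology on T. *)
Definition standard_borel (R : realType) (d : measure_display) (T : measurableType d) :=
  exists dist : T -> T -> R,
    [/\
        ((forall x y, dist x y = 0 <-> x = y) /\
         (forall x y, dist x y = dist y x) /\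
         (forall x y z, dist x z <= dist x y + dist y z)),
        (forall u : nat -> T,
           (forall e : R, 0 < e -> exists N, forall k l, (N <= k)%N -> (N <= l)%N ->
              dist (u k) (u l) < e) ->
           exists a, forall e : R, 0 < e -> exists N, forall k, (N <= k)%N -> dist (u k) a < e),
        (exists D : set T, countable D /\
           forall x (e : R), 0 < e -> exists2 y, D y & dist x y < e) &
        (forall A : set T, measurable A <-> <<s metric_open dist >> A) ].

Section PiMeasurable.
Context (n : nat) (d : 'I_n -> measure_display) (M : forall i, measurableType (d i)).

Definition pi_cylinders : set (set (forall i, M i)) :=
  [set A | exists i (B : set (M i)), measurable B /\ A = (fun f => f i) @^-1` B].

End PiMeasurable.

Arguments pi_cylinders {n d} M.

Definition piMeas (n : nat) (d : 'I_n -> measure_display)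
  (M : forall i, measurableType (d i)) : Type := g_sigma_algebraType (pi_cylinders M).

Definition borelOf (T : ptopologicalType) := g_sigma_algebraType (@open T).

Section Team.
Context (R : realType) (n : nat) (dX : measure_display) (X : measurableType dX)
  (dY : 'I_n -> measure_display) (Y : forall i, measurableType (dY i))
  (U : 'I_n -> pseudoPMetricType R).

Definition action_meas : Type := piMeas (fun i => borelOf (U i)).

Definition team_policy (g : forall i, Y i -> U i) : Prop :=
  forall i, measurable_fun [set: Y i] (g i : Y i -> borelOf (U i)).

Definition team_cost (c : X -> (forall i, U i) -> R)
  (mu : probability (X * piMeas Y)%type R) (g : forall i, Y i -> U i) : \bar R :=
  (\int[mu]_p (c p.1 (fun i => g i (p.2 i)))%:E)%E.

Definition team_value (c : X -> (forall i, U i) -> R)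
  (mu : probability (X * piMeas Y)%type R) : \bar R :=
  ereal_inf [set team_cost c mu g | g in team_policy].

Definition assumption_A1 (c : X -> (forall i, U i) -> R) : Prop :=
  measurable_fun [set: (X * action_meas)%type] (fun p : (X * action_meas)%type => c p.1 p.2)
  /\ exists K : R, forall x u, `|c x u| <= K.

(* A3: mu << zeta (x) Qbar^1 (x) ... (x) Qbar^n, where zeta is the X-marginal of mu;
   the product measure is the measure on X x Y^1 x ... x Y^n that agrees with
   zeta(A0) * prod_i Qbar^i(A_i) on measurable rectangles *)
Definition assumption_A3 (mu : probability (X * piMeas Y)%type R) : Prop :=
  exists (Q : forall i, probability (Y i) R)
         (P : {measure set (X * piMeas Y)%type -> \bar R}),
    (forall (A0 : set X) (A : forall i, set (Y i)),
        measurable A0 -> (forall i, measurable (A i)) ->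
        P (A0 `*` [set y : piMeas Y | forall i, A i (y i)]) =
        (mu (A0 `*` [set: piMeas Y]) * (\prod_(i < n) fine (Q i (A i)))%:E)%E)
    /\ mu `<< P.

Definition assumption_A4 : Prop := forall i, compact [set: U i].

Definition assumption_A5 (c : X -> (forall i, U i) -> R) : Prop :=
  [/\ assumption_A1 c,
      (forall x, continuous (fun u : prod_topology (fun i => U i : topologicalType) => c x u))
    & assumption_A4].

Definition setwise_cvg (mu_ : nat -> probability (X * piMeas Y)%type R)
  (mu : probability (X * piMeas Y)%type R) : Prop :=
  forall A : set (X * piMeas Y)%type, measurable A -> mu_ m A @[m --> \oo] --> mu A.

End Team.

From HB Require Import structures.
From mathcomp Require Import all_boot all_order all_algebra.
From mathcomp Require Import all_classical all_reals all_analysis.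
From mathcomp Require Import measurable_realfun lra.
Import Order.TTheory GRing.Theory Num.Theory.
Import numFieldNormedType.Exports.
Local Open Scope classical_set_scope.
Local Open Scope ring_scope.

(* Fix a team policy g.  Its cost x |-> c(x, g(y)) is a bounded measurable
   function on X x Y^1 x ... x Y^n, and setwise convergence of probability
   measures implies convergence of the integrals of every bounded measurable
   function: uniformly approximate such a function within eps by a step
   function  sum_k a_k 1_{A_k},  whose integrals  sum_k a_k mu_m(A_k)
   converge by setwise convergence, and conclude by an eps/3 argument.
   Hence J(c, mu_m, g) --> J(c, mu, g), and since J*(c, mu_m) <= J(c, mu_m, g),
     limsup_m J*(c, mu_m) <= limsup_m J(c, mu_m, g) = J(c, mu, g).
   Taking the infimum over g gives the theorem. *)

Section BoundedIntegrals.
Context {d : measure_display} {T : measurableType d} {R : realType}.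
Implicit Types (P : probability T R) (f s : T -> R).

Lemma bounded_integrable P {f} {K : R} :
  measurable_fun setT f -> (forall x, `|f x| <= K) ->
  P.-integrable setT (EFin \o f).
Proof.
move=> mf fK; apply/integrableP; split; first exact/measurable_EFinP.
apply: (@le_lt_trans _ _ (\int[P]_x (cst `|K|%:E x))%E).
  apply: ge0_le_integral => //.
  - by apply: measurableT_comp => //; exact/measurable_EFinP.
  - by move=> x _ /=; rewrite lee_fin (le_trans (fK x) (ler_norm K)).
by rewrite integral_cst // [X in (_ * X)%E]probability_setT mule1 ltry.
Qed.

Definition step_fun {M : nat} (a : 'I_M -> R) (A : 'I_M -> set T) : T -> R :=
  fun x => \sum_(k < M) a k * \1_(A k) x.

Lemma measurable_step_fun {M} (a : 'I_M -> R) {A : 'I_M -> set T} :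
  (forall k, measurable (A k)) -> measurable_fun setT (step_fun a A).
Proof.
move=> mA; apply: measurable_sum => k.
by apply: measurable_funM; [exact: measurable_cst | exact: measurable_indic].
Qed.

Lemma integral_step_fun P {M} (a : 'I_M -> R) {A : 'I_M -> set T} :
  (forall k, measurable (A k)) ->
  (\int[P]_x (step_fun a A x)%:E = (\sum_(k < M) a k * fine (P (A k)))%:E)%E.
Proof.
move=> mA; under eq_integral => x _ do rewrite /step_fun -sumEFin.
rewrite integral_sum //; last first.
  move=> k; apply: (@bounded_integrable P (fun x => a k * \1_(A k) x) `|a k|).
    by apply: measurable_funM; [exact: measurable_cst | exact: measurable_indic].
  move=> x; rewrite normrM indicE.
  by case: (x \in A k); rewrite ?normr1 ?normr0 ?mulr1 ?mulr0.
rewrite -sumEFin; apply: eq_bigr => k _.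
under eq_integral => x _ do rewrite EFinM.
rewrite integralZl //; last exact: integrable_indic.
by rewrite integral_indic // setIT EFinM fineK // fin_num_measure.
Qed.

(* A bounded measurable function is uniformly eps-close to a step function
   with measurable level sets: quantize  (f + K) / eps  by its integer part. *)
Lemma uniform_step_approx {f} {K eps : R} : measurable_fun setT f ->
  (forall x, `|f x| <= K) -> 0 < eps ->
  exists M (a : 'I_M -> R) (A : 'I_M -> set T),
    (forall k, measurable (A k)) /\ forall x, `|f x - step_fun a A x| <= eps.
Proof.
move=> mf fK eps0.
pose g x := (f x + K) / eps.
have mg : measurable_fun setT g.
  apply: measurable_funM; last exact: measurable_cst.
  by apply: measurable_funD => //; exact: measurable_cst.
have fK' x : - K <= f x <= K by rewrite -ler_norml.
have g0 x : 0 <= g x.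
  by rewrite divr_ge0 ?(ltW eps0) //; have /andP[? _] := fK' x; lra.
have gM x : g x <= (K + K) / eps.
  by rewrite ler_pM2r ?invr_gt0 //; have /andP[_ ?] := fK' x; lra.
pose M := (Num.truncn ((K + K) / eps)).+1.
pose idx x := Num.truncn (g x).
have idxM x : (idx x < M)%N by rewrite ltnS le_truncn.
pose A (k : 'I_M) := g @^-1` [set` (`[k%:R, k.+1%:R[ : interval R)%R].
have mA k : measurable (A k).
  by rewrite -[A k]setTI; apply: mg => //; exact: measurable_itv.
have AP x (k : 'I_M) : A k x <-> idx x = k.
  rewrite /A /= in_itv /=; split; first by move=> h; apply/eqP; rewrite truncn_eq.
  by move=> <-; rewrite -truncn_eq.
pose a (k : 'I_M) := k%:R * eps - K.
exists M, a, A; split => // x.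
have -> : step_fun a A x = a (Ordinal (idxM x)).
  rewrite /step_fun (bigD1 (Ordinal (idxM x))) //= big1 ?addr0.
    by rewrite indicE mem_set ?mulr1 //; apply/AP.
  move=> j; rewrite indicE -(inj_eq val_inj) /=.
  by case: (boolP (x \in A j)) => [/set_mem/AP ->|_]; rewrite ?eqxx ?mulr0.
have := truncn_itv (g0 x); rewrite -/(idx x) -natr1 /a /=.
have : f x = g x * eps - K by rewrite /g mulfVK ?addrK // gt_eqF.
move: (idx x)%:R (g x) => k y -> /andP[lo hi].
rewrite ler_norml; apply/andP; split; nra.
Qed.

Lemma integral_uniform_close P {f s} {K eps : R} :
  measurable_fun setT f -> measurable_fun setT s ->
  (forall x, `|f x| <= K) -> (forall x, `|f x - s x| <= eps) ->
  `| fine (\int[P]_x (f x)%:E) - fine (\int[P]_x (s x)%:E) | <= eps.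
Proof.
move=> mf ms fK fs.
have sK x : `|s x| <= K + eps.
  move: (fK x) (fs x); rewrite !ler_norml => /andP[? ?] /andP[? ?].
  by apply/andP; split; lra.
have intf := bounded_integrable P mf fK.
have ints := bounded_integrable P ms sK.
have mfs : measurable_fun setT (fun x => (f x - s x)%:E).
  exact/measurable_EFinP/measurable_funB.
have close : (`| \int[P]_x (f x)%:E - \int[P]_x (s x)%:E | <= eps%:E)%E.
  rewrite -integralB_EFin //; under eq_integral => x _ do rewrite -EFinB.
  apply: le_trans (le_abse_integral _ _ mfs) _ => //.
  apply: (@le_trans _ _ (\int[P]_x (cst eps%:E x))%E).
    apply: ge0_le_integral => //; first exact: measurableT_comp.
    by move=> x _ /=; rewrite lee_fin.
  by rewrite integral_cst // [X in (_ * X)%E]probability_setT mule1.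
move: close; rewrite -(fineK (integrable_fin_num _ intf)) //.
by rewrite -(fineK (integrable_fin_num _ ints)) // -EFinB abse_EFin lee_fin.
Qed.

End BoundedIntegrals.

Section SetwiseConvergence.
Context {d : measure_display} {T : measurableType d} {R : realType}.
Context {mu_ : nat -> probability T R} {mu : probability T R}.
Hypothesis setwise : forall A, measurable A -> mu_ m A @[m --> \oo] --> mu A.

Lemma setwise_cvg_step {M} (a : 'I_M -> R) {A : 'I_M -> set T} :
  (forall k, measurable (A k)) ->
  \sum_(k < M) a k * fine (mu_ m (A k)) @[m --> \oo] -->
  \sum_(k < M) a k * fine (mu (A k)).
Proof.
move=> mA; apply: (@cvg_big _ _ +%R 0 xpredT add_continuous) => k _.
apply: cvgMl_tmp; apply: fine_cvg; rewrite fineK; first exact: setwise.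
exact: fin_num_measure.
Qed.

(* Setwise convergence implies convergence of the integrals of bounded
   measurable functions (eps/3 argument through a step approximation). *)
Lemma setwise_cvg_integral {f : T -> R} {K : R} :
  measurable_fun setT f -> (forall x, `|f x| <= K) ->
  (\int[mu_ m]_x (f x)%:E)%E @[m --> \oo] --> (\int[mu]_x (f x)%:E)%E.
Proof.
move=> mf fK.
have fin (P : probability T R) : (\int[P]_x (f x)%:E)%E \is a fin_num.
  exact: integrable_fin_num (bounded_integrable P mf fK).
rewrite -(fineK (fin mu)); apply/fine_cvgP; split; first exact: nearW.
apply/cvgrPdist_le => e e0.
have e30 : 0 < e / 3 by rewrite divr_gt0.
have [M [a [A [mA fs]]]] := uniform_step_approx mf fK e30.
have ms := measurable_step_fun a mA.
have near_step (P : probability T R) :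
    `| fine (\int[P]_x (f x)%:E) - \sum_(k < M) a k * fine (P (A k)) | <= e / 3.
  by have := integral_uniform_close P mf ms fK fs; rewrite integral_step_fun.
have /cvgrPdist_le /(_ _ e30) := setwise_cvg_step a mA.
apply: filterS => m step_close.
have := near_step mu; have := near_step (mu_ m).
rewrite /= !ler_norml => /andP[? ?] /andP[? ?]; move: step_close.
by rewrite ler_norml => /andP[? ?]; apply/andP; split; lra.
Qed.

End SetwiseConvergence.

Lemma limn_esup_le (R : realType) (u v : (\bar R)^nat) :
  (forall m, (u m <= v m)%E) -> (limn_esup u <= limn_esup v)%E.
Proof.
move=> uv; rewrite !limn_esup_lim.
apply: lee_lim; [exact: is_cvg_esups | exact: is_cvg_esups |].
apply: nearW => k /=; apply: ge_ereal_sup => _ [j jk <-].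
by apply: le_trans (uv j) _; apply: ereal_sup_ubound; exists j.
Qed.

Lemma measurable_coord {n : nat} {d : 'I_n -> measure_display}
  (M : forall i, measurableType (d i)) (i : 'I_n) :
  measurable_fun setT (fun f : piMeas M => f i).
Proof. by move=> _ B mB; rewrite setTI; apply: sub_gen_smallest; exists i, B. Qed.

Lemma measurable_policy_cost {R : realType} {n : nat}
  {dX : measure_display} {X : measurableType dX}
  {dY : 'I_n -> measure_display} {Y : forall i, measurableType (dY i)}
  {U : 'I_n -> pseudoPMetricType R} {c : X -> (forall i, U i) -> R}
  {g : forall i, Y i -> U i} :
  measurable_fun [set: (X * action_meas U)%type]
    (fun p : (X * action_meas U)%type => c p.1 p.2) ->
  team_policy g ->
  measurable_fun setT (fun p : (X * piMeas Y)%type => c p.1 (fun i => g i (p.2 i))).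
Proof.
move=> mc pg.
pose act (p : (X * piMeas Y)%type) : (X * action_meas U)%type :=
  (p.1, fun i => g i (p.2 i)).
have -> : (fun p : (X * piMeas Y)%type => c p.1 (fun i => g i (p.2 i))) =
    (fun q : (X * action_meas U)%type => c q.1 q.2) \o act by [].
apply: measurableT_comp; first exact: mc.
apply: measurable_fun_pair; first exact: measurable_fst.
apply: measurability => // _ [_ [i [B [mB ->]]] <-].
have mgi : measurable_fun setT
    (fun p : (X * piMeas Y)%type => (g i (p.2 i) : borelOf (U i))).
  apply: (measurableT_comp (pg i)).
  have mcoord := measurableT_comp (measurable_coord Y i) measurable_snd.
  exact: mcoord.
exact: mgi measurableT B mB.
Qed.

Theorem theorem4p4 (R : realType) (n : nat)
  (dX : measure_display) (X : measurableType dX)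
  (dY : 'I_n -> measure_display) (Y : forall i, measurableType (dY i))
  (U : 'I_n -> pseudoPMetricType R)
  (c : X -> (forall i, U i) -> R)
  (mu_ : nat -> probability (X * piMeas Y)%type R)
  (mu : probability (X * piMeas Y)%type R) :
  standard_borel R X ->
  (forall i, standard_borel R (Y i)) ->
  (forall i, hausdorff_space (U i)) ->
  assumption_A1 c -> assumption_A4 U -> assumption_A5 c ->
  (forall m, assumption_A3 (mu_ m)) -> assumption_A3 mu ->
  setwise_cvg mu_ mu ->
  (limn_esup (fun m => team_value c (mu_ m)) <= team_value c mu)%E.
Proof.
move=> _ _ _ [mc [K cK]] _ _ _ _ setwise.
apply: le_ereal_inf_tmp => _ [g pg <-].
have cost_cvg : team_cost c (mu_ m) g @[m --> \oo] --> team_cost c mu g.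
  apply: (setwise_cvg_integral setwise (measurable_policy_cost mc pg)).
  by move=> p; apply: cK.
rewrite -(cvg_limn_einf_sup cost_cvg).2.
by apply: limn_esup_le => m; apply: ereal_inf_lbound; exists g.
Qed.
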